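(* Let $\mathfrak{H}$ be a Euclidean space and let $(\mathcal{X},\mathsf{S},\gamma,(\Lambda_{a})_{a\in\mathcal{A}})$ be a spectral decomposition system for $\mathfrak{H}$ such that the set $\{\Lambda_a\}_{a\in\mathcal{A}}$ is closed in $\mathscr{L}(\mathcal{X},\mathfrak{H})$. Let $(X_n)_{n\in\mathbb{N}}$ be a sequence in $\mathfrak{H}$ converging to some $X\in\mathfrak{H}$ and, for every $n\in\mathbb{N}$, let $a_n\in\mathcal{A}_{X_n}$. Suppose that there exists $a\in\mathcal{A}$ such that $\Lambda_{a_n}\to\Lambda_a$ in $\mathscr{L}(\mathcal{X},\mathfrak{H})$. Then $a\in\mathcal{A}_X$.
   Context: A Euclidean space is a finite-dimensional real Hilbert space. $\mathscr{L}(\mathcal{X},\mathfrak{H})$ is the space of linear operators from $\mathcal{X}$ to $\mathfrak{H}$ with the operator-norm topology. A spectral decomposition system for a Euclidean space $\mathfrak{H}$ is a tuple $(\mathcal{X},\mathsf{S},\gamma,(\Lambda_a)_{a\in\mathcal{A}})$ where $\mathcal{X}$ is a Euclidean space, $\mathsf{S}$ is a group acting on $\mathcal{X}$ such that each map $x\mapsto \mathsf{s}\cdot x$ ($\mathsf{s}\in\mathsf{S}$) is a linear isometry, $\gamma\colon\mathfrak{H}\to\mathcal{X}$ is a mapping, and each $\Lambda_a\colon\mathcal{X}\to\mathfrak{H}$ is a linear isometry (linear with $\|\Lambda_a x\|=\|x\|$), such that: [A] there exists a mapping $\tau\colon\mathcal{X}\to\mathcal{X}$ with $\tau(\mathsf{s}\cdot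 x)=\tau(x)$ for all $\mathsf{s},x$, $\tau(x)\in\mathsf{S}\cdot x=\{\mathsf{s}\cdot x:\mathsf{s}\in\mathsf{S}\}$ for all $x\in\mathcal{X}$, and $\gamma\circ\Lambda_a=\tau$ for all $a\in\mathcal{A}$; [B] for every $X\in\mathfrak{H}$ there exists $a\in\mathcal{A}$ with $X=\Lambda_a\gamma(X)$; [C] $\langle X,Y\rangle\le\langle\gamma(X),\gamma(Y)\rangle$ for all $X,Y\in\mathfrak{H}$. For $X\in\mathfrak{H}$, $\mathcal{A}_X=\{a\in\mathcal{A}: X=\Lambda_a\gamma(X)\}$. *)

From HB Require Import structures.
From mathcomp Require Import all_boot all_order all_algebra.
From mathcomp Require Import reals.
Set Implicit Arguments. Unset Strict Implicit. Unset Printing Implicit Defensive.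
Import Order.TTheory GRing.Theory Num.Theory.
Local Open Scope ring_scope.

(* A Euclidean space of dimension n is modelled as 'rV[R]_n with the standard
   inner product; linear maps 'rV_m -> 'rV_n are matrices acting on the right. *)
Definition inner (R : realType) (n : nat) (u v : 'rV[R]_n) : R := (u *m v^T) 0 0.
Definition enorm (R : realType) (n : nat) (u : 'rV[R]_n) : R := Num.sqrt (inner u u).

Definition is_group (S : Type) (mulS : S -> S -> S) (oneS : S) (invS : S -> S) :=
  [/\ forall s t u, mulS s (mulS t u) = mulS (mulS s t) u,
      forall s, mulS oneS s = s, forall s, mulS s oneS = s,
      forall s, mulS (invS s) s = oneS & forall s, mulS s (invS s) = oneS].

Definition isometric_action (R : realType) (m : nat) (S : Type)
  (mulS : S -> S -> S) (oneS : S) (act : S -> 'rV[R]_m -> 'rV[R]_m) :=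
  [/\ forall x, act oneS x = x,
      forall s t x, act (mulS s t) x = act s (act t x),
      forall s (k : R) x y, act s (k *: x + y) = k *: act s x + act s y
    & forall s x, enorm (act s x) = enorm x].

Definition spectral_decomposition_system (R : realType) (n m : nat) (S : Type)
  (mulS : S -> S -> S) (oneS : S) (invS : S -> S) (act : S -> 'rV[R]_m -> 'rV[R]_m)
  (gamma : 'rV[R]_n -> 'rV[R]_m) (A : Type) (Lam : A -> 'M[R]_(m, n)) : Prop :=
  [/\ is_group mulS oneS invS,
      isometric_action mulS oneS act &
      forall a x, enorm (x *m Lam a) = enorm x] /\
  [/\
      (exists tau : 'rV[R]_m -> 'rV[R]_m,
         [/\ forall s x, tau (act s x) = tau x,
             forall x, exists s, tau x = act s x
           & forall a x, gamma (x *m Lam a) = tau x]),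
      (forall X, exists a, X = gamma X *m Lam a)
    &
      (forall X Y, inner X Y <= inner (gamma X) (gamma Y))].

Definition A_of (R : realType) (n m : nat) (A : Type) (gamma : 'rV[R]_n -> 'rV[R]_m)
  (Lam : A -> 'M[R]_(m, n)) (X : 'rV[R]_n) (a : A) : Prop := X = gamma X *m Lam a.

Definition opnorm_le (R : realType) (m n : nat) (L : 'M[R]_(m, n)) (eps : R) : Prop :=
  forall x : 'rV[R]_m, enorm (x *m L) <= eps * enorm x.

Definition op_cvg (R : realType) (m n : nat) (L_ : nat -> 'M[R]_(m, n)) (L : 'M[R]_(m, n)) :=
  forall eps : R, 0 < eps -> exists N, forall k, (N <= k)%N -> opnorm_le (L_ k - L) eps.

Definition op_closed (R : realType) (m n : nat) (P : 'M[R]_(m, n) -> Prop) :=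
  forall L, (forall eps : R, 0 < eps -> exists M, P M /\ opnorm_le (M - L) eps) -> P L.

Definition vec_cvg (R : realType) (n : nat) (X_ : nat -> 'rV[R]_n) (X : 'rV[R]_n) :=
  forall eps : R, 0 < eps -> exists N, forall k, (N <= k)%N -> enorm (X_ k - X) <= eps.

(** The map [gamma] is nonexpansive: it preserves norms (every [X] is [Lam b (gamma X)]
    for an isometry [Lam b]), and [<X, Y> <= <gamma X, gamma Y>] then gives
    [|gamma X - gamma Y| <= |X - Y|].  Hence [X_k = Lam (a_k) (gamma X_k)] converges
    both to [X] and to [Lam a (gamma X)], and limits are unique. *)
From mathcomp Require Import all_boot all_order all_algebra.
From mathcomp Require Import reals.
From mathcomp Require Import ring lra.
Set Implicit Arguments.
Unset Strict Implicit.
Unset Printing Implicit Defensive.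
Import Order.TTheory GRing.Theory Num.Theory.
Local Open Scope ring_scope.

Section EuclideanNorm.
Variables (R : realType) (n : nat).
Implicit Types (u v w : 'rV[R]_n).

Lemma innerC u v : inner u v = inner v u.
Proof. by rewrite /inner -[v *m u^T]trmxK trmx_mul trmxK [in RHS]mxE. Qed.

Lemma innerDl u v w : inner (u + v) w = inner u w + inner v w.
Proof. by rewrite /inner mulmxDl mxE. Qed.

Lemma innerZl (k : R) u w : inner (k *: u) w = k * inner u w.
Proof. by rewrite /inner -scalemxAl mxE. Qed.

Lemma innerNl u w : inner (- u) w = - inner u w.
Proof. by rewrite -scaleN1r innerZl mulN1r. Qed.

Lemma innerDr u v w : inner w (u + v) = inner w u + inner w v.
Proof. by rewrite innerC innerDl !(innerC w). Qed.

Lemma innerZr (k : R) u w : inner w (k *: u) = k * inner w u.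
Proof. by rewrite innerC innerZl innerC. Qed.

Lemma innerNr u w : inner w (- u) = - inner w u.
Proof. by rewrite innerC innerNl innerC. Qed.

Lemma innerDD u v : inner (u + v) (u + v) = inner u u + 2 * inner u v + inner v v.
Proof. rewrite innerDl !innerDr (innerC v u); ring. Qed.

Lemma innerBB u v : inner (u - v) (u - v) = inner u u - 2 * inner u v + inner v v.
Proof. by rewrite innerDD innerNr innerNl innerNr opprK mulrN. Qed.

Lemma inner_sqr_sum u : inner u u = \sum_i u 0 i ^+ 2.
Proof. by rewrite /inner mxE; apply: eq_bigr => i _; rewrite mxE. Qed.

Lemma inner_ge0 u : 0 <= inner u u.
Proof. by rewrite inner_sqr_sum sumr_ge0 // => i _; rewrite sqr_ge0. Qed.

Lemma inner_eq0 u : inner u u = 0 -> u = 0.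
Proof.
rewrite inner_sqr_sum => /psumr_eq0P sq0; apply/rowP => i.
by apply/eqP; rewrite mxE -sqrf_eq0 sq0 // => j _; rewrite sqr_ge0.
Qed.

Lemma inner_sqr_le u v : inner u v ^+ 2 <= inner u u * inner v v.
Proof.
have [v0 | v_neq0] := eqVneq (inner v v) 0.
  by rewrite v0 mulr0 (inner_eq0 v0) /inner trmx0 mulmx0 mxE expr0n.
have v_gt0 : 0 < inner v v by rewrite lt_def v_neq0 inner_ge0.
(* [|c u - b v|^2 = c (c |u|^2 - b^2)] for [b = <u, v>], [c = |v|^2]. *)
have := inner_ge0 (inner v v *: u - inner u v *: v).
rewrite innerBB !innerZl !innerZr => ge0.
have : 0 <= inner v v * (inner v v * inner u u - inner u v ^+ 2) by nra.
by rewrite pmulr_rge0 // subr_ge0 mulrC.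
Qed.

Lemma enorm_ge0 u : 0 <= enorm u.
Proof. exact: sqrtr_ge0. Qed.

Lemma enorm_sqr u : enorm u ^+ 2 = inner u u.
Proof. exact/sqr_sqrtr/inner_ge0. Qed.

Lemma inner_le_enorm u v : inner u v <= enorm u * enorm v.
Proof.
have uv_ge0 : 0 <= enorm u * enorm v by rewrite mulr_ge0 ?enorm_ge0.
apply: le_trans (real_ler_norm _) _; first exact: num_real.
rewrite -(ler_pXn2r (_ : 0 < 2)%N) ?nnegrE // real_normK ?num_real //.
by rewrite exprMn !enorm_sqr inner_sqr_le.
Qed.

Lemma enormN u : enorm (- u) = enorm u.
Proof. by rewrite /enorm innerNl innerNr opprK. Qed.

Lemma enormB u v : enorm (u - v) = enorm (v - u).
Proof. by rewrite -opprB enormN. Qed.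

Lemma enormD u v : enorm (u + v) <= enorm u + enorm v.
Proof.
rewrite -(ler_pXn2r (_ : 0 < 2)%N) ?nnegrE ?addr_ge0 ?enorm_ge0 //.
rewrite enorm_sqr innerDD sqrrD !enorm_sqr.
by have := inner_le_enorm u v; lra.
Qed.

Lemma enorm_eq0 u : enorm u = 0 -> u = 0.
Proof. by move=> u0; apply: inner_eq0; rewrite -enorm_sqr u0 expr0n. Qed.

End EuclideanNorm.

Section VectorConvergence.
Variables (R : realType) (n : nat).
Implicit Types (x y : 'rV[R]_n).

Lemma eq_vec_cvg (x_ y_ : nat -> 'rV[R]_n) x : x_ =1 y_ -> vec_cvg x_ x -> vec_cvg y_ x.
Proof.
move=> xy cx e e_gt0; have [N xN] := cx e e_gt0.
by exists N => k /xN; rewrite xy.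
Qed.

Lemma vec_cvg_unique (x_ : nat -> 'rV[R]_n) x y : vec_cvg x_ x -> vec_cvg x_ y -> x = y.
Proof.
move=> cx cy; apply/eqP; rewrite -subr_eq0; apply/eqP/enorm_eq0/eqP.
rewrite eq_le enorm_ge0 andbT; apply/ler_addgt0Pr => e e_gt0.
have e2_gt0 : 0 < e / 2 by rewrite divr_gt0.
have [N1 xN] := cx _ e2_gt0; have [N2 yN] := cy _ e2_gt0.
pose k := maxn N1 N2.
have := xN k (leq_maxl _ _); have := yN k (leq_maxr _ _).
have := enormD (x - x_ k) (x_ k - y).
by rewrite addrA subrK (enormB x); lra.
Qed.

Lemma vec_cvg_linear (C : R) (x_ : nat -> 'rV[R]_n) x : 0 < C ->
  (forall e, 0 < e -> e <= 1 ->
     exists N, forall k, (N <= k)%N -> enorm (x_ k - x) <= e * C) ->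
  vec_cvg x_ x.
Proof.
move=> C_gt0 cx eps eps_gt0.
pose e := Num.min 1 (eps / C).
have e_gt0 : 0 < e by rewrite lt_min ltr01 divr_gt0.
have e_le1 : e <= 1 by rewrite ge_min lexx.
have [N xN] := cx e e_gt0 e_le1.
exists N => k /xN /le_trans; apply.
by rewrite -ler_pdivlMr // ge_min ?lexx ?orbT.
Qed.

End VectorConvergence.

Lemma vec_cvg_mulmx (R : realType) (m n : nat) (c : R)
    (x_ : nat -> 'rV[R]_m) (x : 'rV[R]_m) (L_ : nat -> 'M[R]_(m, n)) (L : 'M[R]_(m, n)) :
  0 <= c -> opnorm_le L c -> vec_cvg x_ x -> op_cvg L_ L ->
  vec_cvg (fun k => x_ k *m L_ k) (x *m L).
Proof.
move=> c_ge0 Lc cx cL.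
apply: (@vec_cvg_linear _ _ (1 + enorm x + c)); first by have := enorm_ge0 x; lra.
move=> e e_gt0 e_le1; have [N1 xN] := cx e e_gt0; have [N2 LN] := cL e e_gt0.
exists (maxn N1 N2) => k; rewrite geq_max => /andP[/xN xk /LN Lk].
have -> : x_ k *m L_ k - x *m L = x_ k *m (L_ k - L) + (x_ k - x) *m L.
  by rewrite mulmxBr mulmxBl addrA subrK.
have xk_le : enorm (x_ k) <= e + enorm x.
  by have := enormD (x_ k - x) x; rewrite subrK; lra.
apply: le_trans (enormD _ _) _.
have := Lk (x_ k); have := Lc (x_ k - x); have := enorm_ge0 x; nra.
Qed.

Section SpectralMap.
Variables (R : realType) (n m : nat) (A : Type).
Variables (gamma : 'rV[R]_n -> 'rV[R]_m) (Lam : A -> 'M[R]_(m, n)).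
Hypothesis Lam_isometry : forall a x, enorm (x *m Lam a) = enorm x.
Hypothesis gamma_decomposition : forall X, exists a, A_of gamma Lam X a.
Hypothesis inner_le_gamma : forall X Y, inner X Y <= inner (gamma X) (gamma Y).

Lemma opnorm_Lam a : opnorm_le (Lam a) 1.
Proof. by move=> x; rewrite Lam_isometry mul1r. Qed.

Lemma enorm_gamma X : enorm (gamma X) = enorm X.
Proof. by have [b XbX] := gamma_decomposition X; rewrite {2}XbX Lam_isometry. Qed.

Lemma gamma_nonexpansive X Y : enorm (gamma X - gamma Y) <= enorm (X - Y).
Proof.
rewrite ler_sqrt ?inner_ge0 // !innerBB -!enorm_sqr !enorm_gamma.
by have := inner_le_gamma X Y; lra.
Qed.

Lemma vec_cvg_gamma X_ X : vec_cvg X_ X -> vec_cvg (fun k => gamma (X_ k)) (gamma X).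
Proof.
move=> cX e e_gt0; have [N XN] := cX e e_gt0.
by exists N => k /XN; apply: le_trans (gamma_nonexpansive _ _).
Qed.

End SpectralMap.

Theorem proposition2p17 (R : realType) (n m : nat) (S : Type)
  (mulS : S -> S -> S) (oneS : S) (invS : S -> S) (act : S -> 'rV[R]_m -> 'rV[R]_m)
  (gamma : 'rV[R]_n -> 'rV[R]_m) (A : Type) (Lam : A -> 'M[R]_(m, n)) :
  spectral_decomposition_system mulS oneS invS act gamma Lam ->
  op_closed (fun L => exists a, L = Lam a) ->
  forall (X_ : nat -> 'rV[R]_n) (X : 'rV[R]_n) (a_ : nat -> A),
  vec_cvg X_ X ->
  (forall k, A_of gamma Lam (X_ k) (a_ k)) ->
  forall a : A, op_cvg (fun k => Lam (a_ k)) (Lam a) ->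
  A_of gamma Lam X a.
Proof.
move=> [[_ _ Lam_iso] [_ decomp inner_le]] _ X_ X a_ cX Xk_dec a cLam.
have cLamgamma : vec_cvg (fun k => gamma (X_ k) *m Lam (a_ k)) (gamma X *m Lam a).
  apply: vec_cvg_mulmx ler01 (opnorm_Lam Lam_iso a) _ cLam.
  exact: vec_cvg_gamma decomp inner_le _ _ cX.
exact: vec_cvg_unique cX (eq_vec_cvg (fun k => esym (Xk_dec k)) cLamgamma).
Qed.
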